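(* Let $\mathcal{A}=(Q,\delta,I,F)$ be a complete Büchi automaton with $n=|Q|$, let $\mathcal{B}_S$ be the automaton produced from $\mathcal{A}$ by Schewe's rank-based complementation construction, and let $\mathcal{B}_S^{\mathit{sat}}$ be the saturated variant (both described in the context). Then $\mathcal{L}(\mathcal{B}_S^{\mathit{sat}})=\mathcal{L}(\mathcal{B}_S)$.
   Context: Fix a finite nonempty alphabet $\Sigma$. A Büchi automaton is $\mathcal{A}=(Q,\delta,I,F)$ with $\delta:Q\times\Sigma\to2^Q$, complete if $\delta(q,a)\ne\emptyset$ always; $\delta(P,a)=\bigcup_{p\in P}\delta(p,a)$. A run from $q$ on $\alpha=\alpha_0\alpha_1\cdots$ is $\rho$ with $\rho_0=q$, $\rho_{i+1}\in\delta(\rho_i,\alpha_i)$; accepting if some state of $F$ occurs infinitely often; $\mathcal{L}(\mathcal{A})$ is the set of words with an accepting run from an initial state. Delayed simulation: in the game from $(p_0,r_0)$, in round $i$ Spoiler picks $p_i\xrightarrow{\alpha_i}p_{i+1}$ and Duplicator answers $r_i\xrightarrow{\alpha_i}r_{i+1}$; a Duplicator strategy is a map $\sigma$ with $\sigma(r,p\xrightarrow{a}p')\in\delta(r,a)$ (no lookahead). Duplicator wins if for all $i$, $p_i\in F$ implies $r_k\in F$ for some $k\ge i$. $p\preceq_{\mathit{de}}r$ iff Duplicator has a winning strategy from $(p,r)$. Schewe's construction. A ranking is $f:Q\to\{0,\dots,2n\}$ with $f(q)$ even for $q\in F$; $\mathrm{rank}(f)=\max_q f(q)$. $f$ is $S$-tight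 ($S\subseteq Q$) if $\mathrm{rank}(f)=r$ is odd, $\{f(s)\mid s\in S\}\supseteq\{1,3,\dots,r\}$ and $\{f(q)\mid q\notin S\}=\{0\}$; $\mathcal{T}$ is the set of $Q$-tight rankings. $\mathcal{B}_S=(Q',\delta',I',F')$: $Q'=Q_1\cup Q_2$, $Q_1=2^Q$, $Q_2=\{(S,O,f,i)\in 2^Q\times2^Q\times\mathcal{T}\times\{0,2,\dots,2n-2\}\mid f \text{ is } S\text{-tight},\ O\subseteq S\cap f^{-1}(i)\}$; $I'=\{I\}$; $\delta'=\delta_1\cup\delta_2\cup\delta_3$ with $\delta_1(S,a)=\{\delta(S,a)\}$; $\delta_2(S,a)=\{(S',\emptyset,f,0)\in Q_2\mid S'=\delta(S,a), f \text{ is } S'\text{-tight}\}$; $(S',O',f',i')\in\delta_3((S,O,f,i),a)$ iff $(S',O',f',i')\in Q_2$, $S'=\delta(S,a)$, $f'(q')\le f(q)$ for all $q\in S,q'\in\delta(q,a)$, $\mathrm{rank}(f)=\mathrm{rank}(f')$, $f'$ is $S'$-tight, and either ($O=\emptyset$, $i'=(i+2)\bmod(\mathrm{rank}(f')+1)$, $O'=f'^{-1}(i')$) or ($O\ne\emptyset$, $i'=i$, $O'=\delta(O,a)\cap f'^{-1}(i)$); $F'=\{\emptyset\}\cup\{(S,\emptyset,f,i)\in Q_2\}$. Saturated variant: for $S\subseteq Q$ let $\mathrm{str}(S)=\{q\in Q\mid\exists s\in S: q\preceq_{\mathit{de}}s\}$. $\mathcal{B}_S^{\mathit{sat}}$ has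 the same $Q'$, $I'$, $F'$ as $\mathcal{B}_S$, but transition function $\delta_1^{\mathit{sat}}\cup\delta_2^{\mathit{sat}}\cup\delta_3^{\mathit{sat}}$ where $\delta_1^{\mathit{sat}}(S,a)=\{\mathrm{str}(\delta(S,a))\}$; $\delta_2^{\mathit{sat}}(S,a)=\{(S',\emptyset,f,0)\in Q_2\mid S'=\mathrm{str}(\delta(S,a))\}$; and $(S',O',f',i')\in\delta_3^{\mathit{sat}}((S,O,f,i),a)$ iff $(S',O',f',i')\in Q_2$, $S'=\mathrm{str}(\delta(S,a))$, $f'(q')\le f(q)$ for all $q\in S,q'\in\delta(q,a)$, $\mathrm{rank}(f)=\mathrm{rank}(f')$, and either ($O=\emptyset$, $i'=(i+2)\bmod(\mathrm{rank}(f')+1)$, $O'=f'^{-1}(i')$) or ($O\ne\emptyset$, $i'=i$, $O'=\delta(O,a)\cap f'^{-1}(i)$). *)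

From mathcomp Require Import all_boot.
From mathcomp Require Import boolp.

Set Implicit Arguments.
Unset Strict Implicit.
Unset Printing Implicit Defensive.

Definition accepts {Sigma St : Type} (trans : St -> Sigma -> St -> Prop)
    (init fin : St -> Prop) (w : nat -> Sigma) : Prop :=
  exists rho : nat -> St,
    init (rho 0) /\
    (forall i, trans (rho i) (w i) (rho i.+1)) /\
    (forall N, exists k, N <= k /\ fin (rho k)).

Section Schewe.
Variables (Sigma Q : finType) (delta : Q -> Sigma -> {set Q}) (I F : {set Q}).

Definition deltaS (P : {set Q}) (a : Sigma) : {set Q} :=
  \bigcup_(p in P) delta p a.

(* Duplicator strategy: sigma r p a p' is Duplicator's answer from r to the
   Spoiler move p -a-> p' (no lookahead). *)
Fixpoint dup_run (sigma : Q -> Q -> Sigma -> Q -> Q) (r0 : Q)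
    (ps : nat -> Q) (al : nat -> Sigma) (i : nat) : Q :=
  match i with
  | 0 => r0
  | i'.+1 => sigma (dup_run sigma r0 ps al i') (ps i') (al i') (ps i'.+1)
  end.

Definition delayed_sim (p0 r0 : Q) : Prop :=
  exists sigma : Q -> Q -> Sigma -> Q -> Q,
    (forall r p a p', p' \in delta p a -> sigma r p a p' \in delta r a) /\
    (forall (ps : nat -> Q) (al : nat -> Sigma),
       ps 0 = p0 ->
       (forall i, ps i.+1 \in delta (ps i) (al i)) ->
       forall i, ps i \in F ->
         exists k, i <= k /\ dup_run sigma r0 ps al k \in F).

Definition str (S : {set Q}) : {set Q} :=
  [set q | `[< exists2 s, s \in S & delayed_sim q s >]].

Definition n := #|Q|.

Definition rank (f : {ffun Q -> nat}) : nat := \max_(q : Q) f q.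

Definition is_ranking (f : {ffun Q -> nat}) : Prop :=
  forall q, f q <= 2 * n /\ (q \in F -> ~~ odd (f q)).

Definition tight (S : {set Q}) (f : {ffun Q -> nat}) : Prop :=
  [/\ odd (rank f),
      (forall j, odd j -> j <= rank f -> exists2 s, s \in S & f s = j)
    & (forall q, q \notin S -> f q = 0)].

Definition preim (f : {ffun Q -> nat}) (i : nat) : {set Q} :=
  [set q | f q == i].

Definition inQ2 (S O : {set Q}) (f : {ffun Q -> nat}) (i : nat) : Prop :=
  [/\ is_ranking f, tight setT f, tight S f,
      ~~ odd i /\ i <= 2 * n - 2
    & O \subset S :&: preim f i].

(* States Q' = Q_1 + (candidate Q_2 tuples (S, O, f, i)) *)
Definition sstate : Type :=
  ({set Q} + ({set Q} * {set Q} * {ffun Q -> nat} * nat))%type.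

Definition s_init (x : sstate) : Prop := x = inl I.

Definition s_final (x : sstate) : Prop :=
  x = inl set0 \/
  exists S f i, x = inr (S, set0, f, i) /\ inQ2 S set0 f i.

(* Shared part of delta_3 / delta_3^sat, given the successor macrostate S'. *)
Definition step3 (S O : {set Q}) (f : {ffun Q -> nat}) (i : nat) (a : Sigma)
    (S' O' : {set Q}) (f' : {ffun Q -> nat}) (i' : nat) : Prop :=
  [/\ inQ2 S O f i, inQ2 S' O' f' i',
      (forall q q', q \in S -> q' \in delta q a -> f' q' <= f q),
      rank f = rank f'
    & (O = set0 /\ i' = (i + 2) %% (rank f' + 1) /\ O' = S' :&: preim f' i')
      \/ (O != set0 /\ i' = i /\ O' = deltaS O a :&: preim f' i)].

Definition schewe_trans (x : sstate) (a : Sigma) (y : sstate) : Prop :=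
  match x, y with
  | inl X, inl X' => X' = deltaS X a
  | inl X, inr (X', Y', f, i) =>
      [/\ inQ2 X' Y' f i, X' = deltaS X a, Y' = set0, i = 0 & tight X' f]
  | inr (X, Y, f, i), inr (X', Y', f', i') =>
      [/\ X' = deltaS X a, tight X' f' & step3 X Y f i a X' Y' f' i']
  | inr _, inl _ => False
  end.

Definition schewe_sat_trans (x : sstate) (a : Sigma) (y : sstate) : Prop :=
  match x, y with
  | inl X, inl X' => X' = str (deltaS X a)
  | inl X, inr (X', Y', f, i) =>
      [/\ inQ2 X' Y' f i, X' = str (deltaS X a), Y' = set0 & i = 0]
  | inr (X, Y, f, i), inr (X', Y', f', i') =>
      X' = str (deltaS X a) /\ step3 X Y f i a X' Y' f' i'
  | inr _, inl _ => False
  end.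

End Schewe.

From Pilot Require Import Defs.
From mathcomp Require Import all_boot.
From mathcomp Require Import boolp.
From mathcomp Require Import zify.

Set Implicit Arguments.
Unset Strict Implicit.
Unset Printing Implicit Defensive.

(* Both [B_S] and [B_S^sat], written [B] below, accept exactly the words
   rejected by [A].
   Soundness: an accepting run of [A] stays inside the macrostates of a run of
   [B]; there its ranks decrease and settle on a value [c], even because [F] is
   visited infinitely often.  The breakpoint index cycles through all even
   values below the odd rank, and once it moves to [c] the run of [A] is
   trapped in [O], which then never empties again.
   Completeness: if [A] rejects [w], so does the DAG of (saturated)
   macrostates, since a state of [str(Y)] is simulated by one of [Y] and an
   accepting path can be pulled back step by step.  The Kupferman-Vardi ranking
   of this DAG is bounded by [2n], even on [F] and nonincreasing along edges.
   Delayed simulation preserves its levels, so every odd rank below the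
   eventual maximal rank occurs at all late positions: the rankings are
   eventually tight and [B] can guess them.  Its breakpoint empties infinitely
   often because the DAG has no infinite path of constant even rank. *)

Lemma ex_minimal_nat (P : nat -> Prop) :
  (exists m, P m) -> exists m, P m /\ forall m', m' < m -> ~ P m'.
Proof.
case=> m0 Pm0; have exP : exists m, `[< P m >] by exists m0; apply/asboolP.
case: (ex_minnP exP) => m /asboolP Pm m_min; exists m; split=> // m' lt_m'm Pm'.
by have := m_min m' (asboolT Pm'); rewrite leqNgt lt_m'm.
Qed.

Lemma downward_leq (P : nat -> Prop) :
  (forall l, P l.+1 -> P l) -> forall l l', l <= l' -> P l' -> P l.
Proof.
move=> P_down l l' /subnK <-; elim: (l' - l) => [|d IH] //= Pd.
by apply: IH; apply: P_down; rewrite -addSn.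
Qed.

Lemma nonincreasing_eventually_const (v : nat -> nat) :
  (forall t, v t.+1 <= v t) -> exists N, forall t, N <= t -> v t = v N.
Proof.
move=> v_dec; have attained : exists m, exists N, v N = m by exists (v 0), 0.
have [m [[N vN] m_min]] := ex_minimal_nat attained.
exists N => t le_Nt; apply/eqP; rewrite eqn_leq; apply/andP; split.
  apply: (downward_leq (P := fun k => v t <= v k)) le_Nt (leqnn _) => k.
  by move=> le; apply: leq_trans le (v_dec k).
by rewrite vN leqNgt; apply/negP => lt; apply: m_min lt _; exists t.
Qed.

Lemma uniform_witness_fin (T : finType) (R : T -> nat -> Prop) :
  (forall q l, R q l.+1 -> R q l) ->
  (forall l, exists q, R q l) -> exists q, forall l, R q l.
Proof.
move=> R_down R_ex; apply: contrapT => no_uniform.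
have bound q : exists l, ~ R q l by apply/existsNP => Rq; apply: no_uniform; exists q.
pose l_ q := projT1 (cid (bound q)).
have [q Rq] := R_ex (\max_q l_ q).
apply: (projT2 (cid (bound q))).
by apply: (downward_leq (R_down q)) Rq; apply: leq_bigmax.
Qed.

Lemma dependent_choice (T : Type) (good : nat -> T -> Prop) (step : nat -> T -> T -> Prop) :
  (forall j x, good j x -> exists y, step j x y /\ good j.+1 y) ->
  forall j x, good j x -> exists pi : nat -> T,
    pi 0 = x /\ forall t, step (j + t) (pi t) (pi t.+1) /\ good (j + t) (pi t).
Proof.
move=> extend j x good_x.
pose next j x := if pselect (exists y, step j x y /\ good j.+1 y) is left e
  then projT1 (cid e) else x.
have nextP j0 x0 : good j0 x0 -> step j0 x0 (next j0 x0) /\ good j0.+1 (next j0 x0).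
  rewrite /next; case: pselect => [e _|no /extend //]; exact: projT2 (cid e).
pose pi := fix pi t := if t is t'.+1 then next (j + t') (pi t') else x.
have good_pi t : good (j + t) (pi t).
  by elim: t => [|t IH]; rewrite ?addn0 // addnS; case: (nextP _ _ IH).
by exists pi; split=> // t; split=> //; case: (nextP _ _ (good_pi t)).
Qed.

Lemma iter_add2_mod_even r x0 c : odd r -> ~~ odd x0 -> x0 <= r -> ~~ odd c -> c <= r ->
  exists s, iter s.+1 (fun x => (x + 2) %% r.+1) x0 = c.
Proof.
move=> odd_r even_x0 le_x0r even_c le_cr.
have iterE s : iter s (fun x => (x + 2) %% r.+1) x0 = (x0 + s.*2) %% r.+1.
  elim: s => [|s IH]; first by rewrite addn0 modn_small.
  by rewrite iterS IH modnDml doubleS -addnA addn2.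
have x0E := odd_double_half x0; have cE := odd_double_half c.
have rE := odd_double_half r.+1.
rewrite (negbTE even_x0) add0n in x0E; rewrite (negbTE even_c) add0n in cE.
rewrite /= odd_r /= add0n in rE.
exists (c./2 + r.+1./2 - x0./2).-1; rewrite iterE.
have -> : x0 + (c./2 + r.+1./2 - x0./2).-1.+1.*2 = c + r.+1.
  by move: x0E cE rE le_x0r le_cr; rewrite -!mul2n; lia.
by rewrite modnDr modn_small.
Qed.

Definition splice (T : Type) (l : nat) (a b : nat -> T) (t : nat) : T :=
  if t < l then a t else b (t - l).

Lemma splice_lt (T : Type) l (a b : nat -> T) t : t < l -> splice l a b t = a t.
Proof. by rewrite /splice => ->. Qed.

Lemma splice_addn (T : Type) l (a b : nat -> T) s : splice l a b (l + s) = b s.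
Proof. by rewrite /splice ltnNge leq_addr /= addKn. Qed.

Lemma splice_leq (T : Type) l (a b : nat -> T) t :
  b 0 = a l -> t <= l -> splice l a b t = a t.
Proof.
move=> ba; rewrite leq_eqVlt => /orP[/eqP->|/splice_lt//].
by rewrite /splice ltnn subnn.
Qed.

Lemma leq_add_split m N k : m + N <= k -> exists2 d, N <= d & k = m + d.
Proof.
move=> le_k; have le_mk : m <= k by apply: leq_trans le_k; apply: leq_addr.
by exists (k - m); rewrite ?leq_subRL ?subnKC.
Qed.

Lemma eventually_forall_ltn (P : nat -> nat -> Prop) K :
  (forall i, i < K -> exists M, forall j, M <= j -> P i j) ->
  exists M, forall i, i < K -> forall j, M <= j -> P i j.
Proof.
elim: K => [|K IH] ev; first by exists 0.
have [Ma HMa] := IH (fun i lt => ev i (ltnW lt)).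
have [Mb HMb] := ev K (ltnSn K).
exists (Ma + Mb) => i; rewrite ltnS leq_eqVlt => /orP[/eqP-> | lt] j le_j.
- by apply: HMb; apply: leq_trans le_j; apply: leq_addl.
- by apply: HMa => //; apply: leq_trans le_j; apply: leq_addr.
Qed.

Section Runs.
Variables (Sigma Q : finType) (delta : Q -> Sigma -> {set Q}).

Definition is_run (al : nat -> Sigma) (pi : nat -> Q) : Prop :=
  forall t, pi t.+1 \in delta (pi t) (al t).

Definition is_run_upto (al : nat -> Sigma) (pi : nat -> Q) (l : nat) : Prop :=
  forall t, t < l -> pi t.+1 \in delta (pi t) (al t).

Lemma splice_run al l a b :
  is_run_upto al a l -> b 0 = a l -> is_run (fun s => al (l + s)) b ->
  is_run al (splice l a b).
Proof.
move=> run_a ba run_b t; case: (ltnP t l) => [lt_tl|le_lt].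
  by rewrite (splice_lt _ _ lt_tl) splice_leq //; apply: run_a.
by rewrite -(subnKC le_lt) -addnS !splice_addn; apply: run_b.
Qed.

Hypothesis delta_complete : forall q a, delta q a != set0.

Definition some_succ (q : Q) (a : Sigma) : Q := odflt q [pick x in delta q a].

Lemma some_succP q a : some_succ q a \in delta q a.
Proof.
rewrite /some_succ; case: pickP => //= none.
by case/set0Pn: (delta_complete q a) => x; rewrite none.
Qed.

Lemma ex_run al q : exists pi, pi 0 = q /\ is_run al pi.
Proof.
pose pi := fix pi t := if t is t'.+1 then some_succ (pi t') (al t') else q.
by exists pi; split=> // t; apply: some_succP.
Qed.

End Runs.

(** * Delayed simulation *)

Section DelayedSimulation.
Variables (Sigma Q : finType) (delta : Q -> Sigma -> {set Q}) (F : {set Q}).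
Hypothesis delta_complete : forall q a, delta q a != set0.

Local Notation strategy := (Q -> Q -> Sigma -> Q -> Q).
Local Notation is_run := (is_run delta).

Definition legal (sigma : strategy) : Prop :=
  forall r p a p', p' \in delta p a -> sigma r p a p' \in delta r a.

Definition wins (sigma : strategy) (p0 r0 : Q) : Prop :=
  forall ps al, ps 0 = p0 -> is_run al ps ->
  forall i, ps i \in F -> exists k, i <= k /\ dup_run sigma r0 ps al k \in F.

Lemma dup_run_ext (sigma : strategy) r0 ps al ps' al' t :
  (forall i, i <= t -> ps i = ps' i) -> (forall i, i < t -> al i = al' i) ->
  dup_run sigma r0 ps al t = dup_run sigma r0 ps' al' t.
Proof.
elim: t => [|t IH] //= eq_ps eq_al.
rewrite IH; last 2 first.
- by move=> i lei; apply: eq_ps; apply: leqW.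
- by move=> i lti; apply: eq_al; apply: ltnW.
by rewrite !eq_ps ?eq_al // ltnW.
Qed.

Lemma dup_run_addn (sigma : strategy) r0 ps al t s :
  dup_run sigma r0 ps al (t + s) =
  dup_run sigma (dup_run sigma r0 ps al t) (fun s => ps (t + s)) (fun s => al (t + s)) s.
Proof. by elim: s => [|s IH]; rewrite ?addn0 // addnS /= IH addnS. Qed.

Lemma dup_run_is_run (sigma : strategy) r0 ps al :
  legal sigma -> is_run al ps -> is_run al (dup_run sigma r0 ps al).
Proof. by move=> legal_sigma run_ps t; apply: legal_sigma; apply: run_ps. Qed.

(* A play from the reached position is answered as the continuation of the
   first [t] rounds. *)
Lemma wins_after (sigma : strategy) p0 r0 ps al t :
  wins sigma p0 r0 -> ps 0 = p0 -> is_run al ps ->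
  wins sigma (ps t) (dup_run sigma r0 ps al t).
Proof.
move=> win ps0 run_ps ps' al' ps'0 run_ps' i Fi.
pose ps2 := splice t ps ps'; pose al2 := splice t al al'.
have ps2_0 : ps2 0 = p0.
  by rewrite /ps2 /splice; case: (posnP t) => [t0|//]; rewrite t0 /= ps'0 t0.
have run_ps2 : is_run al2 ps2.
  apply: (splice_run _ ps'0).
  - by move=> s lt_st; rewrite /al2 splice_lt //; apply: run_ps.
  - by move=> s; rewrite /al2 splice_addn; apply: run_ps'.
have Fi2 : ps2 (t + i) \in F by rewrite /ps2 splice_addn.
have [k [le_k Fk]] := win ps2 al2 ps2_0 run_ps2 (t + i) Fi2.
have [d le_id kE] := leq_add_split le_k; exists d; split=> //.
move: Fk; rewrite kE dup_run_addn.
rewrite (@dup_run_ext _ _ ps2 al2 ps al); last 2 first.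
- by move=> j lejt; rewrite /ps2 splice_leq.
- by move=> j lt_jt; rewrite /al2 splice_lt.
rewrite (@dup_run_ext _ _ _ _ ps' al') // => j _.
- by rewrite /ps2 splice_addn.
- by rewrite /al2 splice_addn.
Qed.

Lemma delayed_sim_refl q : delayed_sim delta F q q.
Proof.
pose copy (r p : Q) a p' := if p' \in delta r a then p' else some_succ delta r a.
exists copy; split=> [r p a p' _|ps al ps0 run_ps i Fi].
  by rewrite /copy; case: ifP => // _; apply: some_succP.
exists i; split=> //; suff -> : dup_run copy q ps al i = ps i by [].
by elim: i {Fi} => [|i IH] //=; rewrite IH /copy run_ps.
Qed.

Lemma delayed_sim_run q s al ps :
  delayed_sim delta F q s -> ps 0 = q -> is_run al ps ->
  exists rho, [/\ rho 0 = s, is_run al rho,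
    forall t, delayed_sim delta F (ps t) (rho t) &
    forall i, ps i \in F -> exists k, i <= k /\ rho k \in F].
Proof.
case=> sigma [legal_sigma win] ps0 run_ps.
exists (dup_run sigma s ps al); split=> //.
- exact: dup_run_is_run.
- by move=> t; exists sigma; split=> //; exact: (wins_after win ps0 run_ps).
- exact: win.
Qed.

End DelayedSimulation.

(** * Breakpoints *)

Section BreakpointDynamics.
Variables (Sigma Q : finType) (delta : Q -> Sigma -> {set Q}).
Variables (a : nat -> Sigma) (S O : nat -> {set Q}) (f : nat -> {ffun Q -> nat}).
Variables (idx : nat -> nat) (r : nat).

Local Notation bump i := ((i + 2) %% r.+1).

(* The breakpoint part [(O t, idx t)] of a run of [B] inside [Q_2], with
   macrostates [S t] and rankings [f t] of rank [r]. *)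
Hypothesis O_step : forall t,
  (O t = set0 /\ idx t.+1 = bump (idx t) /\ O t.+1 = S t.+1 :&: Defs.preim (f t.+1) (idx t.+1)) \/
  (O t != set0 /\ idx t.+1 = idx t /\
   O t.+1 = deltaS delta (O t) (a t) :&: Defs.preim (f t.+1) (idx t)).

Lemma O_emptyE t : O t = set0 ->
  idx t.+1 = bump (idx t) /\ O t.+1 = S t.+1 :&: Defs.preim (f t.+1) (idx t.+1).
Proof. by move=> O0; case: (O_step t) => [[_ //]|[]]; rewrite O0 eqxx. Qed.

Lemma O_nonemptyE t : O t != set0 ->
  idx t.+1 = idx t /\ O t.+1 = deltaS delta (O t) (a t) :&: Defs.preim (f t.+1) (idx t).
Proof. by move=> ne; case: (O_step t) => [[O0]|[_ //]]; rewrite O0 eqxx in ne. Qed.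

Lemma idx_le t : idx 0 <= r -> idx t <= r.
Proof.
move=> le0; elim: t => [//|t IH].
by case: (O_step t) => -[_ [-> _]] //; rewrite -ltnS ltn_pmod.
Qed.

Lemma idx_even t : odd r -> ~~ odd (idx 0) -> ~~ odd (idx t).
Proof.
move=> odd_r even0; elim: t => [//|t IH].
case: (O_step t) => -[_ [-> _]] //.
by rewrite odd_mod /= ?odd_r // addn2 /= negbK.
Qed.

Lemma idx_const N l : (forall u, u < l -> O (N + u) != set0) -> idx (N + l) = idx N.
Proof.
elim: l => [|l IH] ne; first by rewrite addn0.
rewrite addnS (O_nonemptyE (ne l (ltnSn l))).1 IH // => u lt_ul.
by apply: ne; apply: ltnW.
Qed.

Lemma O_sub t : (forall t, deltaS delta (S t) (a t) \subset S t.+1) ->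
  O 0 \subset S 0 :&: Defs.preim (f 0) (idx 0) -> O t \subset S t :&: Defs.preim (f t) (idx t).
Proof.
move=> S_succ O0; elim: t => [//|t IH].
case: (O_step t) => -[_ [idxE ->]]; first exact: subxx.
rewrite idxE setSI // (subset_trans _ (S_succ t)) //.
apply/subsetP => q /bigcupP[p Op e]; apply/bigcupP; exists p => //.
by move/subsetP: IH => /(_ p Op); rewrite inE => /andP[].
Qed.

Lemma O_backward_path N l v : (forall u, u < l -> O (N + u) != set0) ->
  v \in O (N + l) -> exists pi, [/\ pi l = v,
    forall t, t < l -> pi t.+1 \in delta (pi t) (a (N + t)) &
    forall t, t <= l -> pi t \in O (N + t)].
Proof.
elim: l v => [|l IH] v ne Ov.
  by exists (fun _ => v); split=> // t; rewrite leqn0 => /eqP->.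
move: (Ov); rewrite addnS (O_nonemptyE (ne l (ltnSn l))).2 inE => /andP[/bigcupP[u Ou e] _].
have [pi [pil run in_O]] := IH u (fun u lt => ne u (ltnW lt)) Ou.
exists (fun t => if t <= l then pi t else v); split=> [|t|t]; first by rewrite ltnn.
- rewrite ltnS => le_tl; rewrite le_tl; case: leqP => [le_lt|lt_tl]; last exact: run.
  have tE : t = l by apply/eqP; rewrite eqn_leq le_tl.
  by rewrite tE pil.
- move=> le_t; case: leqP => [le_tl|lt_lt]; first exact: in_O.
  have tE : t = l.+1 by apply/eqP; rewrite eqn_leq le_t.
  by rewrite tE.
Qed.

Lemma O_trap pi c t : is_run delta a pi ->
  (forall s, t < s -> pi s \in S s /\ f s (pi s) = c) ->
  O t = set0 -> idx t.+1 = c -> forall s, pi (t.+1 + s) \in O (t.+1 + s).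
Proof.
move=> run stable Ot idx_c.
suff trapped s : pi (t.+1 + s) \in O (t.+1 + s) /\ idx (t.+1 + s) = c.
  by move=> s; case: (trapped s).
elim: s => [|s [in_O idx_s]].
  have [S_t f_t] := stable t.+1 (ltnSn t).
  by rewrite addn0 (O_emptyE Ot).2 !inE S_t f_t idx_c eqxx.
have ne : O (t.+1 + s) != set0 by apply/set0Pn; exists (pi (t.+1 + s)).
have [S_t f_t] := stable (t.+1 + s).+1 (ltac:(lia)).
rewrite addnS (O_nonemptyE ne).1 (O_nonemptyE ne).2 idx_s !inE f_t eqxx andbT.
by split=> //; apply/bigcupP; exists (pi (t.+1 + s)) => //; apply: run.
Qed.

Lemma O_next_empty t : O t = set0 -> (exists t', t < t' /\ O t' = set0) ->
  exists t', [/\ t < t', O t' = set0 & idx t' = bump (idx t)].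
Proof.
move=> Ot [t' [lt_tt' Ot']].
have [d [Od d_min]] : exists d, O (t.+1 + d) = set0 /\
    forall d', d' < d -> ~ O (t.+1 + d') = set0.
  by apply: ex_minimal_nat; exists (t' - t.+1); rewrite subnKC.
exists (t.+1 + d); split=> //; first by rewrite ltnS leq_addr.
rewrite idx_const => [|u lt_ud]; first by rewrite (O_emptyE Ot).1.
by apply/eqP => Ou; apply: d_min lt_ud Ou.
Qed.

(* Once [O] is emptied at the moment its index moves to [c], a run that keeps
   rank [c] is caught in [O] forever. *)
Lemma no_run_of_stable_rank pi N c :
  odd r -> idx 0 <= r -> ~~ odd (idx 0) -> ~~ odd c -> c <= r ->
  (forall N, exists t, N <= t /\ O t = set0) -> is_run delta a pi ->
  ~ (forall t, N <= t -> pi t \in S t /\ f t (pi t) = c).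
Proof.
move=> odd_r le0 even0 even_c le_cr empties run stable.
have [t0 [le_t0 Ot0]] := empties N.
have [s sE] := iter_add2_mod_even odd_r (idx_even t0 odd_r even0) (idx_le t0 le0) even_c le_cr.
have [t [le_t Ot idx_t]] :
    exists t, [/\ N <= t, O t = set0 & idx t = iter s (fun x => bump x) (idx t0)].
  elim: s {sE} => [|s [t [le_t Ot idx_t]]]; first by exists t0.
  have [t' [lt_tt' Ot' idx_t']] := O_next_empty Ot (empties t.+1).
  by exists t'; split=> //; [apply: leq_trans (ltnW lt_tt') | rewrite iterS -idx_t].
have stable_t u : t < u -> pi u \in S u /\ f u (pi u) = c.
  by move=> lt_tu; apply: stable; apply: leq_trans le_t (ltnW lt_tu).
have idx_c : idx t.+1 = c by rewrite (O_emptyE Ot).1 idx_t -sE iterS.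
have [t' [le_t' Ot']] := empties t.+1.
by have := O_trap run stable_t Ot idx_c (t' - t.+1); rewrite subnKC // Ot' inE.
Qed.

End BreakpointDynamics.

Fixpoint breakpoints (Sigma Q : finType) (delta : Q -> Sigma -> {set Q}) (a : nat -> Sigma)
    (S : nat -> {set Q}) (f : nat -> {ffun Q -> nat}) (r t : nat) : {set Q} * nat :=
  if t is t'.+1 then
    let: (B, i) := breakpoints delta a S f r t' in
    if B == set0 then (S t :&: Defs.preim (f t) ((i + 2) %% r.+1), (i + 2) %% r.+1)
    else (deltaS delta B (a t') :&: Defs.preim (f t) i, i)
  else (set0, 0).

Lemma breakpoints_step (Sigma Q : finType) (delta : Q -> Sigma -> {set Q}) a S f r t
    (O := fun t => (breakpoints delta a S f r t).1)
    (idx := fun t => (breakpoints delta a S f r t).2) :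
  (O t = set0 /\ idx t.+1 = (idx t + 2) %% r.+1 /\
   O t.+1 = S t.+1 :&: Defs.preim (f t.+1) (idx t.+1)) \/
  (O t != set0 /\ idx t.+1 = idx t /\
   O t.+1 = deltaS delta (O t) (a t) :&: Defs.preim (f t.+1) (idx t)).
Proof.
rewrite /O /idx /=; case: (breakpoints _ _ _ _ _ t) => B i /=.
by case: eqP => [->|/eqP ne]; [left | right].
Qed.

Definition buchi_accepts (Sigma Q : finType) (delta : Q -> Sigma -> {set Q}) (I F : {set Q})
    (w : nat -> Sigma) : Prop :=
  accepts (fun q a q' => q' \in delta q a) (fun q => q \in I) (fun q => q \in F) w.

(** * Soundness *)

Section MacrostateAutomaton.
Variables (Sigma Q : finType) (delta : Q -> Sigma -> {set Q}) (F : {set Q}).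
Variable g : {set Q} -> {set Q}.

(* [B_S] with the successor macrostate [delta(S, a)] replaced by [g delta(S, a)]:
   [g = id] gives [B_S] and [g = str] gives [B_S^sat]. *)
Definition trans_with (x : sstate Q) (a : Sigma) (y : sstate Q) : Prop :=
  match x, y with
  | inl X, inl X' => X' = g (deltaS delta X a)
  | inl X, inr (X', Y', f, i) =>
      [/\ inQ2 F X' Y' f i, X' = g (deltaS delta X a), Y' = set0 & i = 0]
  | inr (X, Y, f, i), inr (X', Y', f', i') =>
      X' = g (deltaS delta X a) /\ step3 delta F X Y f i a X' Y' f' i'
  | inr _, inl _ => False
  end.

Definition st_S (x : sstate Q) : {set Q} := match x with inl X => X | inr (X, _, _, _) => X end.
Definition st_O (x : sstate Q) : {set Q} := match x with inl _ => set0 | inr (_, Y, _, _) => Y end.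
Definition st_f (x : sstate Q) : {ffun Q -> nat} :=
  match x with inl _ => [ffun _ => 0] | inr (_, _, f, _) => f end.
Definition st_i (x : sstate Q) : nat := match x with inl _ => 0 | inr (_, _, _, i) => i end.
Definition is_Q2 (x : sstate Q) : bool := if x is inr _ then true else false.

Lemma trans_with_S x a y : trans_with x a y -> st_S y = g (deltaS delta (st_S x) a).
Proof. by case: x => [X|[[[X Y] f] i]]; case: y => [X'|[[[X' Y'] f'] i']] //= []. Qed.

Lemma trans_with_Q2 x a y : is_Q2 x -> trans_with x a y -> is_Q2 y /\
  step3 delta F (st_S x) (st_O x) (st_f x) (st_i x) a (st_S y) (st_O y) (st_f y) (st_i y).
Proof. by case: x => [X|[[[X Y] f] i]]; case: y => [X'|[[[X' Y'] f'] i']] //= _ []. Qed.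

Lemma trans_with_enter x a y : ~~ is_Q2 x -> is_Q2 y -> trans_with x a y -> st_i y = 0.
Proof. by case: x => [X|[[[X Y] f] i]]; case: y => [X'|[[[X' Y'] f'] i']] //= _ _ []. Qed.

Lemma final_Q2 x : is_Q2 x -> s_final F x -> st_O x = set0.
Proof. by case: x => // [[[[X Y] f] i]] _ [//|[S [f' [i' [[_ -> _ _]]]]]]. Qed.

Lemma final_Q1 x : ~~ is_Q2 x -> s_final F x -> st_S x = set0.
Proof. by case: x => // X _ [[->]|[S [f' [i' []]]]]. Qed.

End MacrostateAutomaton.

Section Soundness.
Variables (Sigma Q : finType) (delta : Q -> Sigma -> {set Q}) (I F : {set Q}).
Variables (g : {set Q} -> {set Q}) (w : nat -> Sigma).
Hypothesis g_ext : forall Y : {set Q}, Y \subset g Y.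
Variable rho : nat -> sstate Q.
Hypothesis rho_init : s_init I (rho 0).
Hypothesis rho_trans : forall j, trans_with delta F g (rho j) (w j) (rho j.+1).
Hypothesis rho_final : forall N, exists k, N <= k /\ s_final F (rho k).

Local Notation step_at j := (step3 delta F (st_S (rho j)) (st_O (rho j)) (st_f (rho j))
  (st_i (rho j)) (w j) (st_S (rho j.+1)) (st_O (rho j.+1)) (st_f (rho j.+1)) (st_i (rho j.+1))).

Lemma run_in_macrostates sig : sig 0 \in I -> is_run delta w sig ->
  forall j, sig j \in st_S (rho j).
Proof.
move=> sig0 run; elim=> [|j IH]; first by rewrite rho_init.
rewrite (trans_with_S (rho_trans j)); apply: (subsetP (g_ext _)).
by apply/bigcupP; exists (sig j).
Qed.

Lemma ranking_phase : (forall j, st_S (rho j) != set0) ->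
  exists m, [/\ st_i (rho m) = 0, forall t, is_Q2 (rho (m + t)) & forall t, step_at (m + t)].
Proof.
move=> nonempty; have [m [Q2_m m_min]] : exists m, is_Q2 (rho m) /\
    forall m', m' < m -> ~ is_Q2 (rho m').
  apply: ex_minimal_nat; apply: contrapT => never.
  have [k [_ Fk]] := rho_final 0.
  have Q1_k : ~~ is_Q2 (rho k) by apply/negP => Q2_k; apply: never; exists k.
  by have := nonempty k; rewrite (final_Q1 Q1_k Fk) eqxx.
have is_Q2_m t : is_Q2 (rho (m + t)).
  by elim: t => [|t IH]; rewrite ?addn0 // addnS; case: (trans_with_Q2 IH (rho_trans _)).
have step_m t : step_at (m + t) by case: (trans_with_Q2 (is_Q2_m t) (rho_trans (m + t))).
exists m; split=> //.
case: m Q2_m m_min {is_Q2_m step_m} => [|m] Q2_m m_min; first by move: Q2_m; rewrite rho_init.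
by apply: (trans_with_enter _ Q2_m (rho_trans m)); apply/negP; apply: m_min.
Qed.

Lemma complement_sound : ~ buchi_accepts delta I F w.
Proof.
case=> sig [sig0 [run_sig F_sig]].
have in_S := run_in_macrostates sig0 run_sig.
have [m [idx0 Q2 step]] : exists m, [/\ st_i (rho m) = 0,
    forall t, is_Q2 (rho (m + t)) & forall t, step_at (m + t)].
  by apply: ranking_phase => j; apply/set0Pn; exists (sig j).
pose f t := st_f (rho (m + t)); pose r := rank (f 0).
have rank_f t : rank (f t) = r.
  by elim: t => [//|t IH]; rewrite /f addnS; case: (step t) => _ _ _ <- _.
have Q2_t t : inQ2 F (st_S (rho (m + t))) (st_O (rho (m + t))) (f t) (st_i (rho (m + t))).
  by case: (step t).
have odd_r : odd r by case: (Q2_t 0) => _ [].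
have even_idx0 : ~~ odd (st_i (rho (m + 0))) by case: (Q2_t 0) => _ _ _ [].
pose v t := f t (sig (m + t)).
have [N v_const] : exists N, forall t, N <= t -> v t = v N.
  apply: nonincreasing_eventually_const => t; rewrite /v /f addnS.
  by case: (step t) => _ _ dec _ _; apply: dec; rewrite ?in_S // -addnS; apply: run_sig.
apply: (@no_run_of_stable_rank _ _ delta (fun t => w (m + t))
  (fun t => st_S (rho (m + t))) (fun t => st_O (rho (m + t))) f
  (fun t => st_i (rho (m + t))) r _ (fun t => sig (m + t)) N (v N)) => //.
- by move=> t /=; case: (step t) => _ _ _ _; rewrite -!addnS -/(f t.+1) rank_f addn1.
- by rewrite addn0 idx0.
- have [k [le_k Fk]] := F_sig (m + N); have [d le_Nd kE] := leq_add_split le_k.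
  rewrite -(v_const d le_Nd) /v; case: (Q2_t d) => ranking _ _ _ _.
  by case: (ranking (sig (m + d))) => _; apply; rewrite -kE.
- by rewrite /v -(rank_f N); apply: leq_bigmax.
- move=> N'; have [k [le_k Fk]] := rho_final (m + N').
  have [d le_d kE] := leq_add_split le_k; exists d; split=> //.
  by apply: (final_Q2 (F := F) (Q2 d)); rewrite -kE.
- by move=> t; rewrite /= addnS; apply: run_sig.
- by move=> t le_Nt /=; rewrite in_S; split=> //; apply: v_const.
Qed.

End Soundness.

(** * The level ranking of the run DAG *)

Section LevelRanking.
Variables (Sigma Q : finType) (delta : Q -> Sigma -> {set Q}) (F : {set Q}).
Hypothesis delta_complete : forall q a, delta q a != set0.
Variables (w : nat -> Sigma) (X : nat -> {set Q}).
Hypothesis X_succ : forall j q q', q \in X j -> q' \in delta q (w j) -> q' \in X j.+1.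

Definition run_from j (pi : nat -> Q) : Prop := forall t, pi t.+1 \in delta (pi t) (w (j + t)).

Definition inf_often_F (pi : nat -> Q) : Prop := forall N, exists k, N <= k /\ pi k \in F.

Definition inf_path (P : nat -> Q -> Prop) j q : Prop :=
  exists pi, [/\ pi 0 = q, run_from j pi & forall t, P (j + t) (pi t)].

Definition path_to (P : nat -> Q -> Prop) (E : {set Q}) j q l : Prop :=
  exists pi, [/\ pi 0 = q, (forall t, t < l -> pi t.+1 \in delta (pi t) (w (j + t))),
    forall t, t <= l -> P (j + t) (pi t) & pi l \in E].

Definition reachF P j q : Prop := exists l, path_to P F j q l.

(* The Kupferman-Vardi levels of the run DAG [X]: level [2i+1] keeps the nodes
   of level [2i] with an infinite future inside it, level [2i+2] those of level
   [2i+1] that can reach [F] inside it. *)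
Fixpoint level k : nat -> Q -> Prop :=
  if k is k'.+1 then fun j q =>
    level k' j q /\ (if odd k' then reachF (level k') j q else inf_path (level k') j q)
  else fun j q => q \in X j.

Definition pcons (q : Q) (pi : nat -> Q) (t : nat) : Q := if t is t'.+1 then pi t' else q.

Lemma run_from_X j pi : pi 0 \in X j -> run_from j pi -> forall t, pi t \in X (j + t).
Proof.
move=> X0 run; elim=> [|t IH]; first by rewrite addn0.
by rewrite addnS; apply: X_succ IH (run t).
Qed.

Lemma ex_run_from j q : exists pi, pi 0 = q /\ run_from j pi.
Proof. exact: (ex_run delta_complete (fun t => w (j + t))). Qed.

Lemma level_X k j q : level k j q -> q \in X j.
Proof. by elim: k j q => [|k IH] j q //= [/IH]. Qed.

Lemma level_leS k j q : level k.+1 j q -> level k j q.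
Proof. by case. Qed.

Lemma level_le k k' j q : k <= k' -> level k' j q -> level k j q.
Proof. by move=> le_kk'; apply: (downward_leq (P := fun k => level k j q)) le_kk' => l; case. Qed.

Lemma level_even_path k j pi : ~~ odd k -> run_from j pi ->
  (forall t, level k (j + t) (pi t)) -> forall t, level k.+1 (j + t) (pi t).
Proof.
move=> even_k run in_k t /=; rewrite (negbTE even_k); split=> //.
exists (fun s => pi (t + s)); split; first by rewrite addn0.
- by move=> s; rewrite addnS -addnA; apply: run.
- by move=> s; rewrite -addnA.
Qed.

Lemma level_even_inf k j q : ~~ odd k -> level k.+1 j q ->
  exists2 pi, pi 0 = q /\ run_from j pi & forall t, level k.+1 (j + t) (pi t).
Proof.
move=> even_k [_]; rewrite (negbTE even_k) => -[pi [pi0 run in_k]].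
by exists pi; [split | apply: level_even_path].
Qed.

Lemma level_even_succ k j q : ~~ odd k -> level k.+1 j q ->
  exists2 q', q' \in delta q (w j) & level k.+1 j.+1 q'.
Proof.
move=> even_k /(level_even_inf even_k) [pi [pi0 run] in_k1].
exists (pi 1); first by rewrite -pi0 -[j]addn0; apply: run.
by have := in_k1 1; rewrite addn1.
Qed.

Lemma inf_path_cons P j q q' : q' \in delta q (w j) -> P j q ->
  inf_path P j.+1 q' -> inf_path P j q.
Proof.
move=> e Pq [pi [pi0 run in_P]]; exists (pcons q pi); split=> // -[|t] /=.
- by rewrite addn0 pi0.
- by rewrite addnS -addSn; apply: run.
- by rewrite addn0.
- by rewrite addnS -addSn.
Qed.

Lemma path_to_cons P E j q q' l : q' \in delta q (w j) -> P j q ->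
  path_to P E j.+1 q' l -> path_to P E j q l.+1.
Proof.
move=> e Pq [pi [pi0 run in_P Fl]]; exists (pcons q pi); split=> // -[|t] /= lt.
- by rewrite addn0 pi0.
- by rewrite addnS -addSn; apply: run.
- by rewrite addn0.
- by rewrite addnS -addSn; apply: in_P.
Qed.

Lemma path_to0 P E j q : path_to P E j q 0 -> q \in E.
Proof. by case=> pi [<-]. Qed.

Lemma path_to_start P E j q l : path_to P E j q l -> P j q.
Proof. by case=> pi [<- _ /(_ 0 (leq0n l))]; rewrite addn0. Qed.

Lemma path_to_next P E j q l : path_to P E j q l.+1 ->
  exists2 q', q' \in delta q (w j) & path_to P E j.+1 q' l.
Proof.
case=> pi [pi0 run in_P El]; exists (pi 1); first by rewrite -pi0 -[j]addn0; apply: run.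
by exists (fun t => pi t.+1); split=> // t lt; rewrite addSnnS; [apply: run | apply: in_P].
Qed.

Lemma level_pred k j q q' : q \in X j -> q' \in delta q (w j) ->
  level k j.+1 q' -> level k j q.
Proof.
move=> Xq e; elim: k => [|k IH] //= [lq' reach]; have lq := IH lq'.
split=> //; case: ifP reach => _; last exact: inf_path_cons.
by case=> l R; exists l.+1; apply: path_to_cons R.
Qed.

Lemma splice_level (P : nat -> Q -> Prop) j (pi tau : nat -> Q) l : tau 0 = pi l ->
  (forall t, t <= l -> P (j + t) (pi t)) -> (forall s, P (j + l + s) (tau s)) ->
  forall t, P (j + t) (splice l pi tau t).
Proof.
move=> tau0 in_pi in_tau t; case: (leqP t l) => [le_tl|lt_lt].
  by rewrite splice_leq //; apply: in_pi.
by rewrite -(subnKC (ltnW lt_lt)) splice_addn addnA.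
Qed.

Lemma splice_run_from j (pi tau : nat -> Q) l : tau 0 = pi l ->
  (forall t, t < l -> pi t.+1 \in delta (pi t) (w (j + t))) -> run_from (j + l) tau ->
  run_from j (splice l pi tau).
Proof.
by move=> tau0 run_pi run_tau; apply: (splice_run run_pi tau0) => s; rewrite addnA.
Qed.

Lemma sim_run_from j pi q s : pi 0 = q -> run_from j pi ->
  delayed_sim delta F q s -> s \in X j ->
  exists rho, [/\ rho 0 = s, run_from j rho,
    forall t, delayed_sim delta F (pi t) (rho t) /\ rho t \in X (j + t) &
    forall i, pi i \in F -> exists k, i <= k /\ rho k \in F].
Proof.
move=> pi0 run sim_qs Xs.
have [rho [rho0 run_rho sim_rho F_rho]] := delayed_sim_run sim_qs pi0 run.
exists rho; split=> // t; split=> //.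
by apply: run_from_X; rewrite ?rho0.
Qed.

(* Delayed simulation preserves levels: Duplicator copies the infinite path,
   respectively the path to [F], of the simulated node. *)
Lemma level_sim k j q s : delayed_sim delta F q s -> s \in X j -> level k j q -> level k j s.
Proof.
elim: k j q s => [//|k IH] j q s sim_qs Xs /= [lq reach]; split; first exact: IH lq.
case: ifP reach => odd_k.
- case=> l [pi [pi0 run in_k Fl]].
  have [k' k_eq] : exists k', k = k'.+1 by move: odd_k; case: (k) => // k' _; exists k'.
  subst k; have even_k' : ~~ odd k' by [].
  have [tau [tau0 run_tau] in_tau] := level_even_inf even_k' (in_k l (leqnn l)).
  have run' := splice_run_from tau0 run run_tau.
  have in' := splice_level tau0 in_k in_tau.
  have start : splice l pi tau 0 = q by rewrite splice_leq.
  have [rho [rho0 run_rho sim_rho F_rho]] := sim_run_from start run' sim_qs Xs.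
  have [m [le_lm Fm]] := F_rho l (ltac:(by rewrite splice_leq)).
  exists m, rho; split=> // t _; case: (sim_rho t) => sim_t X_t.
  exact: IH sim_t X_t (in' t).
- case=> pi [pi0 run in_k].
  have [rho [rho0 run_rho sim_rho _]] := sim_run_from pi0 run sim_qs Xs.
  exists rho; split=> // t; case: (sim_rho t) => sim_t X_t.
  exact: IH sim_t X_t (in_k t).
Qed.

Lemma path_to_pred P j q l : path_to P setT j q l.+1 -> path_to P setT j q l.
Proof.
case=> pi [pi0 run in_P _]; exists pi; split=> [//|t lt|t lt|]; last by rewrite in_setT.
- by apply: run; apply: ltnW.
- by apply: in_P; apply: leqW.
Qed.

Lemma path_to_sim k j q s l : delayed_sim delta F q s -> s \in X j ->
  path_to (level k) setT j q l -> path_to (level k) setT j s l.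
Proof.
move=> sim_qs Xs [pi [pi0 run in_k _]].
have [tau [tau0 run_tau]] := ex_run_from (j + l) (pi l).
have start : splice l pi tau 0 = q by rewrite splice_leq.
have [rho [rho0 run_rho sim_rho _]] :=
  sim_run_from start (splice_run_from tau0 run run_tau) sim_qs Xs.
exists rho; split=> // t le_tl; case: (sim_rho t) => sim_t X_t.
by apply: level_sim sim_t X_t _; rewrite splice_leq //; apply: in_k.
Qed.

Lemma konig_inf_path P j q : (forall l, path_to P setT j q l) -> inf_path P j q.
Proof.
pose good j q := forall l, path_to P setT j q l.
have extend j0 q0 : good j0 q0 -> exists q', q' \in delta q0 (w j0) /\ good j0.+1 q'.
  move=> all_l; have [q' all'] :
      exists q', forall l, q' \in delta q0 (w j0) /\ path_to P setT j0.+1 q' l.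
    apply: uniform_witness_fin => [q' l [e R]|l]; first by split=> //; apply: path_to_pred.
    by have [q' e R] := path_to_next (all_l l.+1); exists q'.
  by exists q'; split=> [|l]; [case: (all' 0) | case: (all' l)].
move=> all_l; have [pi [pi0 ext]] := dependent_choice extend all_l.
exists pi; split=> // t; first by case: (ext t).
by case: (ext t) => _ /(_ 0) /path_to_start.
Qed.

Hypothesis X_no_acc : forall j pi, pi 0 \in X j -> run_from j pi -> ~ inf_often_F pi.

(* If every late node of level [k+1] reached [F] inside it, alternately
   following such a path to [F] and stepping to a successor in the level would
   give an accepting path; a state carries the distance left to [F]. *)
Lemma ex_level_F_free k j q : ~~ odd k -> level k.+1 j q ->
  exists t q', level k.+1 (j + t) q' /\ ~ reachF (level k.+1) (j + t) q'.
Proof.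
move=> even_k lq; apply: contrapT => no_free.
have reach j' q' : j <= j' -> level k.+1 j' q' -> reachF (level k.+1) j' q'.
  move=> le_jj' lq'; apply: contrapT => NR; apply: no_free.
  by exists (j' - j), q'; rewrite subnKC.
pose good j' (x : Q * nat) := j <= j' /\ path_to (level k.+1) F j' x.1 x.2.
pose step j' (x y : Q * nat) := y.1 \in delta x.1 (w j') /\ (0 < x.2 -> y.2 = x.2.-1).
have extend j' x : good j' x -> exists y, step j' x y /\ good j'.+1 y.
  case: x => q' [|m] [le_jj' R] /=.
    have [q'' e lq''] := level_even_succ even_k (path_to_start R).
    have [m'' R''] := reach _ _ (leqW le_jj') lq''.
    by exists (q'', m''); rewrite /step /good /= (leqW le_jj').
  have [q'' e R''] := path_to_next R.
  by exists (q'', m); rewrite /step /good /= (leqW le_jj').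
have [m0 R0] := reach j q (leqnn j) lq.
have [pi [pi0 ext]] := dependent_choice (j := j) (x := (q, m0)) extend (conj (leqnn j) R0).
apply: (X_no_acc (pi := fun t => (pi t).1) (j := j)).
- by rewrite pi0; apply: level_X lq.
- by move=> t; case: (ext t) => -[].
move=> N; have [m mE] : exists m, (pi N).2 = m by exists (pi N).2.
elim: m N mE => [|m IH] N mE.
  by exists N; split=> //; case: (ext N) => _ [_]; rewrite mE => /path_to0.
have [[_ dec] _] := ext N; have [k' [le_k' Fk']] := IH N.+1 (ltac:(by rewrite dec mE)).
by exists k'; split=> //; apply: ltnW.
Qed.

Lemma reachF_prefix P j pi t : run_from j pi -> (forall s, P (j + s) (pi s)) ->
  reachF P (j + t) (pi t) -> reachF P j (pi 0).
Proof.
elim: t j pi => [|t IH] j pi run in_P; first by rewrite addn0.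
move=> R; have [l R1] : reachF P j.+1 (pi 1).
  apply: (IH j.+1 (fun s => pi s.+1)) => [s|s|] /=; rewrite addSnnS //.
exists l.+1; apply: path_to_cons R1; rewrite -[j]addn0.
- exact: run.
- exact: in_P.
Qed.

(* A node of level [k+1] that cannot reach [F] inside it has an infinite
   future in level [k+1] whose nodes cannot reach [F] inside it either. *)
Lemma ex_level_gap k j q : ~~ odd k -> level k.+1 j q ->
  exists L, forall j', L <= j' -> exists x, level k.+1 j' x /\ ~ level k.+2 j' x.
Proof.
move=> even_k lq; have [t [q' [lq' NR]]] := ex_level_F_free even_k lq.
have [tau [tau0 run] in_k1] := level_even_inf even_k lq'.
exists (j + t) => j' le_j'.
have [s ->] : exists s, j' = j + t + s by exists (j' - (j + t)); rewrite subnKC.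
exists (tau s); split=> // -[_]; rewrite /= even_k => R.
by apply: NR; rewrite -tau0; apply: reachF_prefix run in_k1 R.
Qed.

Local Notation n := #|Q|.

Definition level_set k j : {set Q} := [set q | `[< level k j q >]].

Lemma level_set_card i : i <= n ->
  exists L, forall j, L <= j -> #|level_set i.*2 j| <= n - i.
Proof.
elim: i => [|i IH] le_in; first by exists 0 => j _; rewrite subn0 max_card.
have [L card_L] := IH (ltnW le_in).
have even_i2 : ~~ odd i.*2 by rewrite odd_double.
case: (pselect (exists j q, L <= j /\ level i.*2.+1 j q)) => [[j [q [le_Lj lq]]]|none].
- have [L' gap] := ex_level_gap even_i2 lq.
  exists (L + L') => j' le_j'; have [x [in_x notin_x]] := gap j' (leq_trans (leq_addl _ _) le_j').
  have proper : level_set i.+1.*2 j' \proper level_set i.*2 j'.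
    apply/properP; split.
      apply/subsetP => y; rewrite !inE => /asboolP ly; apply/asboolP.
      by apply: level_le ly; rewrite doubleS leqW.
    by exists x; rewrite !inE; apply/asboolP; [apply: level_leS | rewrite doubleS].
  have := proper_card proper; have := card_L j' (leq_trans (leq_addr _ _) le_j').
  by move: le_in; lia.
- exists L => j le_Lj; suff -> : level_set i.+1.*2 j = set0 by rewrite cards0.
  apply/setP => x; rewrite !inE; apply/asboolP => lx.
  by apply: none; exists j, x; split=> //; apply: level_leS; rewrite -doubleS.
Qed.

Lemma level_top_empty j q : ~ level n.*2.+1 j q.
Proof.
move=> lq; have [L card_L] := level_set_card (leqnn n).
have even_n2 : ~~ odd n.*2 by rewrite odd_double.
have [tau [tau0 run] in_k1] := level_even_inf even_n2 lq.
have := card_L (j + L) (leq_addl _ _); rewrite subnn leqn0 cards_eq0.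
by move/eqP/setP/(_ (tau L)); rewrite !inE => /asboolP; apply; apply: level_leS.
Qed.

Definition rk j q : nat := \max_(k < n.*2.+1 | `[< level k j q >]) k.

Lemma rk_le j q : rk j q <= n.*2.
Proof. by apply/bigmax_leqP => k _; rewrite -ltnS. Qed.

Lemma level_rk j q k : q \in X j -> level k j q <-> k <= rk j q.
Proof.
move=> Xq; split=> [lk|le_k].
  have lt_k : k < n.*2.+1.
    by rewrite ltnNge; apply/negP => le; apply: (@level_top_empty j q); apply: level_le lk.
  exact: (@leq_bigmax_cond _ (fun k : 'I__ => `[< level k j q >]) val (Ordinal lt_k) (asboolT lk)).
apply: (level_le le_k).
rewrite /rk (bigmax_eq_arg ord0); last exact/asboolP.
by case: arg_maxnP => [|i /asboolP]; first exact/asboolP.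
Qed.

Lemma level_at_rk j q : q \in X j -> level (rk j q) j q.
Proof. by move=> Xq; apply/(level_rk _ Xq). Qed.

Lemma rk_notin j q : q \notin X j -> rk j q = 0.
Proof.
move=> NX; rewrite /rk big_pred0 // => k; apply/asboolP => lk.
by move/negP: NX; apply; apply: level_X lk.
Qed.

Lemma rk_even_F j q : q \in F -> ~~ odd (rk j q).
Proof.
move=> Fq; case: (boolP (q \in X j)) => Xq; last by rewrite rk_notin.
apply/negP => odd_rk; suff : rk j q < rk j q by rewrite ltnn.
apply/(level_rk _ Xq) => /=; split; first exact: level_at_rk.
rewrite odd_rk; exists 0, (fun _ => q); split=> // t.
by rewrite leqn0 => /eqP ->; rewrite addn0; apply: level_at_rk.
Qed.

Lemma rk_succ_le j q q' : q \in X j -> q' \in delta q (w j) -> rk j.+1 q' <= rk j q.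
Proof.
move=> Xq e; apply/(level_rk _ Xq).
exact: level_pred Xq e (level_at_rk (X_succ Xq e)).
Qed.

(* A run of constant even rank [c] would lie in level [c+1]. *)
Lemma no_even_rank_run j pi c : ~~ odd c -> run_from j pi -> pi 0 \in X j ->
  ~ (forall t, rk (j + t) (pi t) = c).
Proof.
move=> even_c run X0 rk_c.
have in_c t : level c (j + t) (pi t) by rewrite -(rk_c t); apply/level_at_rk/run_from_X.
have := level_even_path even_c run in_c 0.
by move/(level_rk _ (run_from_X X0 run 0)); rewrite rk_c ltnn.
Qed.

Definition level_vanishes k : Prop := exists M, forall j, M <= j -> forall q, ~ level k j q.

Lemma odd_rank_present i : ~ level_vanishes i.*2.+1 ->
  exists M, forall j, M <= j -> exists2 q, q \in X j & rk j q = i.*2.+1.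
Proof.
move=> persists; have [j [q lq]] : exists j q, level i.*2.+1 j q.
  apply: contrapT => none; apply: persists; exists 0 => j _ q lq; apply: none.
  by exists j, q.
have even_i2 : ~~ odd i.*2 by rewrite odd_double.
have [L gap] := ex_level_gap even_i2 lq.
exists L => j' le_j'; have [x [in_x notin_x]] := gap j' le_j'.
have Xx := level_X in_x; exists x => //.
have ge_x : i.*2.+1 <= rk j' x by apply/(level_rk _ Xx).
have lt_x : ~ i.*2.+2 <= rk j' x by move/(level_rk _ Xx).
by lia.
Qed.

Hypothesis X_sim_pred : forall j q, q \in X j.+1 ->
  exists u s, [/\ u \in X j, s \in delta u (w j) & delayed_sim delta F q s].

(* Saturation enters here: a node of [X j.+1] need not be a successor of a node
   of [X j], but it is simulated by one, which inherits its paths. *)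
Lemma path_to_back k M0 t v l :
  path_to (level k) setT (M0 + t) v l -> exists q, path_to (level k) setT M0 q (l + t).
Proof.
elim: t v l => [|t IH] v l; first by rewrite !addn0 => R; exists v.
rewrite addnS => R; have lv := path_to_start R.
have [u [s [Xu e sim_vs]]] := X_sim_pred (level_X lv).
have Rs := path_to_sim sim_vs (X_succ Xu e) R.
have lu := level_pred Xu e (path_to_start Rs).
by have [q Rq] := IH u l.+1 (path_to_cons e lu Rs); exists q; rewrite addnS -addSn.
Qed.

(* Nodes of level [k] at arbitrarily late positions give, going backwards
   along simulating predecessors, arbitrarily long paths inside level [k] from
   one fixed position; by Koenig's lemma these lie in level [k+1]. *)
Lemma level_vanishes_even k : ~~ odd k -> level_vanishes k.+1 -> level_vanishes k.
Proof.
move=> even_k [M0 vanish]; apply: contrapT => persists.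
have long l : exists q, path_to (level k) setT M0 q l.
  have [j [q [le_j lq]]] : exists j q, M0 + l <= j /\ level k j q.
    apply: contrapT => none; apply: persists; exists (M0 + l) => j le_j q lq.
    by apply: none; exists j, q.
  have le_M0j : M0 <= j by apply: leq_trans le_j; apply: leq_addr.
  have R0 : path_to (level k) setT (M0 + (j - M0)) q 0.
    by exists (fun _ => q); split=> // t; rewrite leqn0 => /eqP->; rewrite !addn0 subnKC.
  have [q0 R] := path_to_back R0; exists q0.
  apply: (downward_leq (P := path_to _ setT _ _)) R => [l' |]; first exact: path_to_pred.
  by rewrite add0n leq_subRL.
have [q0 all_l] := uniform_witness_fin (@path_to_pred (level k) M0) long.
apply: (vanish M0 (leqnn _) q0) => /=; rewrite (negbTE even_k).
by split; [apply: path_to_start (all_l 0) | apply: konig_inf_path].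
Qed.

Lemma level_vanishes_top : level_vanishes n.*2.+1.
Proof. by exists 0 => j _ q; apply: level_top_empty. Qed.

Hypothesis X_nonempty : forall j, X j != set0.

Lemma level1_persists : ~ level_vanishes 1.
Proof.
case=> M vanish; have /set0Pn [q Xq] := X_nonempty M.
have [pi [pi0 run]] := ex_run_from M q.
apply: (vanish M (leqnn M) q); split=> //=.
by exists pi; split=> //; apply: run_from_X; rewrite ?pi0.
Qed.

(* The least [K] for which level [2K+1] vanishes gives the eventual rank
   [2K-1]; all odd ranks below it stay present. *)
Lemma rank_tail : exists M r, [/\ odd r, r < n.*2, 0 < M & forall j, M <= j ->
  (forall q, rk j q <= r) /\ (forall o, odd o -> o <= r -> exists2 q, q \in X j & rk j q = o)].
Proof.
have [K [vanK K_min]] := ex_minimal_nat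
  (ex_intro (fun K => level_vanishes K.*2.+1) n level_vanishes_top).
have K_pos : 0 < K by case: K vanK {K_min} => // /level1_persists.
have le_Kn : K <= n.
  by rewrite leqNgt; apply/negP => /K_min; apply; apply: level_vanishes_top.
have even_K2 : ~~ odd K.*2 by rewrite odd_double.
have [M1 van2K] := level_vanishes_even even_K2 vanK.
have [M2 present] := eventually_forall_ltn (fun i lt => odd_rank_present (K_min i lt)).
exists (M1 + M2).+1, K.*2.-1; split=> //.
- by case: K K_pos {vanK K_min le_Kn even_K2 van2K present} => // K _;
    rewrite doubleS /= odd_double.
- by rewrite -!mul2n; lia.
move=> j le_j; split=> [q|o odd_o le_o].
- case: (boolP (q \in X j)) => Xq; last by rewrite rk_notin.
  have : ~ K.*2 <= rk j q by move/(level_rk _ Xq); apply: van2K; lia.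
  by rewrite -!mul2n; lia.
- have oE : o = (o./2).*2.+1 by rewrite -[o in LHS]odd_double_half odd_o add1n.
  rewrite oE; apply: present; last by lia.
  by move: le_o; rewrite oE -!mul2n; lia.
Qed.

(** * Completeness *)

Section RankedRun.
Variables (M r : nat).
Hypotheses (odd_r : odd r) (r_small : r < n.*2).
Hypothesis rk_tail_le : forall j q, M <= j -> rk j q <= r.
Hypothesis rk_tail_onto :
  forall j o, M <= j -> odd o -> o <= r -> exists2 q, q \in X j & rk j q = o.

Definition rkf j : {ffun Q -> nat} := [ffun q => rk j q].

Lemma rank_rkf j : M <= j -> rank (rkf j) = r.
Proof.
move=> le_Mj; apply/eqP; rewrite eqn_leq; apply/andP; split.
  by apply/bigmax_leqP => q _; rewrite ffunE; apply: rk_tail_le.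
have [q _ rk_q] := rk_tail_onto le_Mj odd_r (leqnn r).
by apply: (bigmax_sup q) => //; rewrite ffunE rk_q.
Qed.

Lemma tight_rkf j (S : {set Q}) : M <= j -> X j \subset S -> tight S (rkf j).
Proof.
move=> le_Mj sub_S; split=> [|o odd_o|q notin_S]; rewrite ?rank_rkf //.
  by move=> le_o; have [q Xq rk_q] := rk_tail_onto le_Mj odd_o le_o; exists q;
    rewrite ?ffunE // (subsetP sub_S).
by rewrite ffunE rk_notin //; apply: contra notin_S; apply: (subsetP sub_S).
Qed.

Lemma ranking_rkf j : is_ranking F (rkf j).
Proof. by move=> q; rewrite ffunE /Defs.n mul2n rk_le; split=> //; apply: rk_even_F. Qed.

Local Notation bps :=
  (breakpoints delta (fun t => w (M + t)) (fun t => X (M + t)) (fun t => rkf (M + t)) r).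
Local Notation bps_step :=
  (breakpoints_step delta (fun t => w (M + t)) (fun t => X (M + t)) (fun t => rkf (M + t)) r).

Lemma bps_sub t : (bps t).1 \subset X (M + t) :&: Defs.preim (rkf (M + t)) (bps t).2.
Proof.
apply: (O_sub bps_step t) => [t'|]; last exact: sub0set.
apply/subsetP => q /bigcupP[p Xp e]; rewrite addnS; exact: X_succ Xp e.
Qed.

Lemma bps_idx t : ~~ odd (bps t).2 /\ (bps t).2 <= r.
Proof.
by split; [apply: (idx_even bps_step) | apply: (idx_le bps_step)].
Qed.

Lemma bps_inQ2 t : inQ2 F (X (M + t)) (bps t).1 (rkf (M + t)) (bps t).2.
Proof.
have le_M : M <= M + t by apply: leq_addr.
split; [exact: ranking_rkf | exact: tight_rkf (subsetT _) | exact: tight_rkf | | exact: bps_sub].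
have [even_i le_ir] := bps_idx t; split=> //.
have ne_ir : (bps t).2 != r by apply: contraNneq even_i => ->.
by move: le_ir ne_ir r_small; rewrite /Defs.n -!mul2n; lia.
Qed.

(* If [O] stayed nonempty, tracing its nodes back would give arbitrarily long
   paths of constant even rank from one position, hence an infinite one. *)
Lemma bps_empties N : exists t, N <= t /\ (bps t).1 = set0.
Proof.
apply: contrapT => never.
have ne t : N <= t -> (bps t).1 != set0.
  by move=> le_t; apply/eqP => Ot; apply: never; exists t.
have idx_c l : (bps (N + l)).2 = (bps N).2.
  by apply: idx_const bps_step _ _ _ => u _; apply/ne/leq_addr.
pose P j v := v \in X j /\ rk j v = (bps N).2.
have long l : exists q, path_to P setT (M + N) q l.
  have /set0Pn [v Ov] := ne (N + l) (leq_addr _ _).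
  have [pi [_ run in_O]] :=
    O_backward_path bps_step (fun u _ => ne _ (leq_addr u N)) Ov.
  exists (pi 0), pi; split=> // t le_tl; first by rewrite -addnA; apply: run.
  move/subsetP: (bps_sub (N + t)) => /(_ _ (in_O t le_tl)).
  by rewrite !inE ffunE addnA idx_c => /andP[Xp /eqP rk_p].
have [q0 all_l] := uniform_witness_fin (@path_to_pred P (M + N)) long.
have [tau [tau0 run in_P]] := konig_inf_path all_l.
apply: (@no_even_rank_run (M + N) tau (bps N).2 _ run) => [||t]; first by case: (bps_idx N).
- by rewrite -[M + N]addn0; case: (in_P 0).
- by case: (in_P t).
Qed.

Variables (g : {set Q} -> {set Q}) (I : {set Q}).
Hypotheses (X0 : X 0 = I) (X_next : forall j, X j.+1 = g (deltaS delta (X j) (w j))).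
Hypothesis M_pos : 0 < M.

Definition ranked_run j : sstate Q :=
  if j < M then inl (X j) else inr (X j, (bps (j - M)).1, rkf j, (bps (j - M)).2).

Lemma ranked_run_addn t :
  ranked_run (M + t) = inr (X (M + t), (bps t).1, rkf (M + t), (bps t).2).
Proof. by rewrite /ranked_run ltnNge leq_addr /= addKn. Qed.

Lemma ranked_run_trans j : trans_with delta F g (ranked_run j) (w j) (ranked_run j.+1).
Proof.
case: (ltngtP j.+1 M) => [lt_jM|lt_Mj|jM].
- by rewrite /ranked_run lt_jM (ltnW lt_jM) /= X_next.
- have [t ->] : exists t, j = M + t by exists (j - M); rewrite subnKC.
  have le_M t' : M <= M + t' by apply: leq_addr.
  rewrite -addnS !ranked_run_addn; split; first by rewrite addnS X_next.
  split; [exact: bps_inQ2 | exact: bps_inQ2 | | |].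
  + by move=> q q' Xq e; rewrite !ffunE addnS; apply: rk_succ_le.
  + by rewrite !rank_rkf.
  + rewrite rank_rkf // addn1.
    by case: (bps_step t) => -[O0 [idxE OE]]; [left | right].
- rewrite /ranked_run jM ltnn -jM ltnSn subnn /= -X_next.
  by have := bps_inQ2 0; rewrite addn0 jM.
Qed.

Lemma ranked_run_accepts : accepts (trans_with delta F g) (s_init I) (s_final F) w.
Proof.
exists ranked_run; split; first by rewrite /s_init /ranked_run M_pos X0.
split=> [|N]; first exact: ranked_run_trans.
have [t [le_t Ot]] := bps_empties N.
exists (M + t); split; first by apply: leq_trans le_t (leq_addl _ _).
rewrite ranked_run_addn Ot; right; exists (X (M + t)), (rkf (M + t)), (bps t).2.
by split=> //; rewrite -Ot; apply: bps_inQ2.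
Qed.

End RankedRun.

End LevelRanking.

Section Completeness.
Variables (Sigma Q : finType) (delta : Q -> Sigma -> {set Q}) (I F : {set Q}).
Hypothesis delta_complete : forall q a, delta q a != set0.
Variables (g : {set Q} -> {set Q}) (w : nat -> Sigma).
Hypothesis g_ext : forall Y : {set Q}, Y \subset g Y.
Hypothesis g_sim :
  forall (Y : {set Q}) q, q \in g Y -> exists2 s, s \in Y & delayed_sim delta F q s.

Fixpoint macro j : {set Q} := if j is j'.+1 then g (deltaS delta (macro j') (w j')) else I.

Lemma macro_succ j q q' : q \in macro j -> q' \in delta q (w j) -> q' \in macro j.+1.
Proof. by move=> Xq e; apply: (subsetP (g_ext _)); apply/bigcupP; exists q. Qed.

Lemma macro_sim_pred j q : q \in macro j.+1 ->
  exists u s, [/\ u \in macro j, s \in delta u (w j) & delayed_sim delta F q s].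
Proof. by case/g_sim=> s /bigcupP[u Xu e] sim; exists u, s. Qed.

Lemma macro_nonempty : I != set0 -> forall j, macro j != set0.
Proof.
move=> I_ne; elim=> [//|j IH] /=.
have /set0Pn [q Xq] := IH; have /set0Pn [q' e] := delta_complete q (w j).
by apply/set0Pn; exists q'; apply: macro_succ Xq e.
Qed.

(* Prepending a simulating predecessor moves an accepting path one position back. *)
Lemma macro_no_accepting_path : ~ buchi_accepts delta I F w ->
  forall j pi, pi 0 \in macro j -> run_from delta w j pi -> ~ inf_often_F F pi.
Proof.
move=> rejects; elim=> [|j IH] pi X0 run acc; first by apply: rejects; exists pi.
have [u [s [Xu e sim]]] := macro_sim_pred X0.
have [rho [rho0 run_rho _ acc_rho]] := delayed_sim_run sim (erefl (pi 0)) run.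
apply: (IH (pcons u rho)) => // [[|t]|N] /=; first by rewrite addn0 rho0.
  by rewrite addnS -addSn; apply: run_rho.
have [i [le_i Fi]] := acc N; have [k [le_k Fk]] := acc_rho i Fi.
by exists k.+1; split=> //; apply: leq_trans le_i (leq_trans le_k (leqnSn _)).
Qed.

Lemma complement_complete : ~ buchi_accepts delta I F w ->
  accepts (trans_with delta F g) (s_init I) (s_final F) w.
Proof.
move=> rejects; case: (eqVneq I set0) => [I0|I_ne].
  have g0 : g set0 = set0.
    by apply/setP => q; rewrite inE; apply/negP => /g_sim[s]; rewrite inE.
  have delta0 a : deltaS delta set0 a = set0 by rewrite /deltaS big_set0.
  exists (fun _ => inl set0); split; first by rewrite /s_init I0.
  by split=> [i|N]; [rewrite /= delta0 g0 | exists N; split=> //; left].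
have no_acc := macro_no_accepting_path rejects.
have [M [r [odd_r r_small M_pos tail]]] := rank_tail delta_complete macro_succ no_acc
  macro_sim_pred (macro_nonempty I_ne).
apply: (ranked_run_accepts (M := M) macro_succ no_acc odd_r r_small) => //.
- by move=> j q le_j; apply: (tail j le_j).1.
- by move=> j o le_j; apply: (tail j le_j).2.
Qed.

Lemma complement_language : accepts (trans_with delta F g) (s_init I) (s_final F) w <->
  ~ buchi_accepts delta I F w.
Proof.
split=> [[rho [rho0 [run acc]]]|]; last exact: complement_complete.
exact: (complement_sound g_ext rho0 run acc).
Qed.

End Completeness.

Lemma accepts_ext (Sigma St : Type) (T1 T2 : St -> Sigma -> St -> Prop) init fin w :
  (forall x a y, T1 x a y <-> T2 x a y) ->
  accepts T1 init fin w <-> accepts T2 init fin w.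
Proof.
by move=> T12; split=> -[rho [rho0 [run acc]]]; exists rho; split=> //; split=> // i; apply/T12.
Qed.

Section SatAndPlain.
Variables (Sigma Q : finType) (delta : Q -> Sigma -> {set Q}) (F : {set Q}).
Hypothesis delta_complete : forall q a, delta q a != set0.

Lemma sub_str (Y : {set Q}) : Y \subset str delta F Y.
Proof.
by apply/subsetP => q Yq; rewrite inE; apply/asboolP; exists q => //; apply: delayed_sim_refl.
Qed.

Lemma str_sim (Y : {set Q}) q : q \in str delta F Y -> exists2 s, s \in Y & delayed_sim delta F q s.
Proof. by rewrite inE => /asboolP. Qed.

Lemma id_sim (Y : {set Q}) q : q \in Y -> exists2 s, s \in Y & delayed_sim delta F q s.
Proof. by move=> Yq; exists q => //; apply: delayed_sim_refl. Qed.

Lemma schewe_sat_transE x a y :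
  schewe_sat_trans delta F x a y <-> trans_with delta F (str delta F) x a y.
Proof. by case: x => [X|[[[X Y] f] i]]; case: y => [X'|[[[X' Y'] f'] i']]. Qed.

(* The extra tightness requirements of [delta_2] and [delta_3] are already part
   of membership in [Q_2]. *)
Lemma schewe_transE x a y : schewe_trans delta F x a y <-> trans_with delta F id x a y.
Proof.
case: x => [X|[[[X Y] f] i]]; case: y => [X'|[[[X' Y'] f'] i']] //=.
- by split=> [[]|[Q2 ? ? ?]]; last (split=> //; case: Q2).
- by split=> [[]|[? st]]; last (split=> //; case: st => _ []).
Qed.

End SatAndPlain.

Theorem lemma8 (Sigma Q : finType) (delta : Q -> Sigma -> {set Q})
    (I F : {set Q}) :
  0 < #|Sigma| ->
  (forall (q : Q) (a : Sigma), delta q a != set0) ->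
  forall w : nat -> Sigma,
    accepts (schewe_sat_trans delta F) (s_init I) (s_final F) w <->
    accepts (schewe_trans delta F) (s_init I) (s_final F) w.
Proof.
move=> _ delta_complete w.
rewrite (accepts_ext _ _ _ (schewe_sat_transE delta F)).
rewrite (accepts_ext _ _ _ (schewe_transE delta F)).
rewrite !complement_language //.
- exact: id_sim.
- exact: sub_str.
- exact: str_sim.
Qed.
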